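(* Let $T\in\mathcal{L}(\mathcal{H})$ have closed range and let $n\ge1$. If $T^n$ is hypo-EP, then $T$ is $n$-hypo-EP.
   Context: $\mathcal{H}$ is a Hilbert space, $\mathcal{L}(\mathcal{H})$ the bounded operators on it; $R(\cdot)$ denotes range. An operator $A$ is hypo-EP if $A$ has closed range and $R(A)\subset R(A^* )$ (equivalently $A^\dagger A-AA^\dagger\ge0$, with $A^\dagger$ the Moore–Penrose inverse). For $n\ge1$, $T$ is $n$-hypo-EP if $T$ has closed range and $R(T^n)\subset R(T^* )$. *)

From HB Require Import structures.
From mathcomp Require Import all_boot all_order all_algebra.
From mathcomp Require Import all_classical all_reals all_analysis.
From mathcomp Require Import complex.
Set Implicit Arguments. Unset Strict Implicit. Unset Printing Implicit Defensive.
Import Order.TTheory GRing.Theory Num.Theory.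
Import numFieldNormedType.Exports.
Local Open Scope classical_set_scope.
Local Open Scope ring_scope.

Definition is_inner_product (R : realType) (V : normedModType R[i])
  (ip : V -> V -> R[i]) : Prop :=
  [/\ forall (a : R[i]) (x y z : V), ip (a *: x + y) z = a * ip x z + ip y z,
      forall x y : V, ip y x = (ip x y)^* &
      forall x : V, ip x x = `|x| ^+ 2].

Definition is_adjoint (R : realType) (V : normedModType R[i])
  (ip : V -> V -> R[i]) (A S : V -> V) : Prop :=
  forall x y : V, ip (A x) y = ip x (S y).

Definition hypoEP (R : realType) (V : normedModType R[i])
  (A As : V -> V) : Prop :=
  closed (range A) /\ range A `<=` range As.

Definition n_hypoEP (R : realType) (V : normedModType R[i]) (n : nat)
  (T Ts : V -> V) : Prop :=
  closed (range T) /\ range (iter n T) `<=` range Ts.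

(* The adjoint of T^n is (T^* )^n, and adjoints are unique because the inner
   product separates points; hence R(T^n) ⊂ R((T^n)^* ) = R((T^* )^n) ⊂ R(T^* )
   as soon as n >= 1. *)
From HB Require Import structures.
From mathcomp Require Import all_boot all_order all_algebra.
From mathcomp Require Import all_classical all_reals all_analysis.
From mathcomp Require Import complex.
Set Implicit Arguments. Unset Strict Implicit. Unset Printing Implicit Defensive.
Import Order.TTheory GRing.Theory Num.Theory.
Import numFieldNormedType.Exports.
Local Open Scope classical_set_scope.
Local Open Scope ring_scope.

Section Adjoint.
Variables (R : realType) (V : normedModType R[i]) (ip : V -> V -> R[i]).

Lemma adjoint_iter (A S : V -> V) (k : nat) :
  is_adjoint ip A S -> is_adjoint ip (iter k A) (iter k S).
Proof.
move=> hAS; elim: k => [|k IH] x y //=.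
by rewrite hAS IH -iterSr.
Qed.

Hypothesis hip : is_inner_product ip.

Lemma inner_product_sep (a b : V) : (forall u, ip u a = ip u b) -> a = b.
Proof.
case: hip => hlin hsym hnorm hab.
have hdd : ip (a - b) (a - b) = 0.
  have -> : a - b = (-1) *: b + a by rewrite scaleN1r addrC.
  by rewrite hlin (hsym _ b) (hsym _ a) hab mulN1r addNr.
by apply/eqP; rewrite -subr_eq0 -normr_eq0 -sqrf_eq0 -hnorm hdd.
Qed.

Lemma adjoint_unique (A S1 S2 : V -> V) :
  is_adjoint ip A S1 -> is_adjoint ip A S2 -> S1 =1 S2.
Proof. by move=> h1 h2 y; apply: inner_product_sep => u; rewrite -h1 h2. Qed.

End Adjoint.

Lemma range_iter_sub (U : Type) (f : U -> U) (k : nat) :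
  (0 < k)%N -> range (iter k f) `<=` range f.
Proof. by case: k => // k _ _ [x _ <-]; exists (iter k f x). Qed.

Theorem mainTheorem14 (R : realType) (V : completeNormedModType R[i])
  (ip : V -> V -> R[i]) (hip : is_inner_product ip)
  (T : {linear V -> V}) (hTc : continuous T)
  (Ts : V -> V) (hTs : is_adjoint ip T Ts)
  (n : nat) (hn : (1 <= n)%N)
  (Tns : V -> V) (hTns : is_adjoint ip (iter n T) Tns) :
  closed (range T) -> hypoEP (iter n T) Tns -> n_hypoEP n T Ts.
Proof.
move=> hc [_ hsub]; split => // y /hsub [z _ <-].
have -> : Tns z = iter n Ts z.
  exact: (adjoint_unique hip hTns (adjoint_iter n hTs) z).
by apply: (range_iter_sub hn); exists z.
Qed.
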